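(* Let $[\mu]\in\mathbb PV_n$ be a critical point of $F_n$ with $\mathrm M_\mu=c_\mu I+D_\mu$, $c_\mu\in\mathbb R$, $D_\mu\in\mathrm{Der}(\mu)$. Then there is a constant $c>0$ such that all eigenvalues of $cD_\mu$ are integers with no common divisor greater than $1$; i.e. the distinct eigenvalues of $cD_\mu$ are integers $k_1<k_2<\dots<k_r$ (with multiplicities $d_1,\dots,d_r\in\mathbb N$) that are coprime as a set.
   Context: $V_n$ is the space of bilinear maps $\mu:\mathbb C^n\times\mathbb C^n\to\mathbb C^n$ with the standard Hermitian structures. $L^\mu_XY=\mu(X,Y)$, $R^\mu_XY=\mu(Y,X)$, $\mathrm M_\mu=2\sum_i L^\mu_{X_i}(L^\mu_{X_i})^*-2\sum_i (L^\mu_{X_i})^*L^\mu_{X_i}-2\sum_i (R^\mu_{X_i})^*R^\mu_{X_i}$ for an orthonormal basis $\{X_i\}$ (a Hermitian matrix), $F_n([\mu])=\operatorname{tr}\mathrm M_\mu^2/\|\mu\|^4$. $[\mu]$ is a critical point of $F_n$ iff $\mathrm M_\mu=c_\mu I+D_\mu$ with $c_\mu\in\mathbb R$, $D_\mu\in\mathrm{Der}(\mu)$ (derivation algebra). (When $D_\mu=0$ the conclusion is read as: the only eigenvalue is $0$, $r=1$, $d_1=n$.) *)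

From mathcomp Require Import all_boot all_order all_algebra.
From mathcomp Require Export reals.
From mathcomp.real_closed Require Export complex.
Set Implicit Arguments. Unset Strict Implicit. Unset Printing Implicit Defensive.
Import GRing.Theory Num.Theory.
Local Open Scope ring_scope.

(* An element of V_n: a bilinear map mu : C^n x C^n -> C^n, encoded by its
   values on the standard (orthonormal) basis: mu i j = mu(e_i, e_j),
   a column vector of C^n. *)
Definition bilin (R : realType) (n : nat) := 'I_n -> 'I_n -> 'cV[R[i]]_n.

Definition evec (R : realType) (n : nat) (i : 'I_n) : 'cV[R[i]]_n :=
  delta_mx i 0.
Arguments evec {R n} i.

Definition bapp (R : realType) (n : nat) (mu : bilin R n) (x y : 'cV[R[i]]_n)
  : 'cV[R[i]]_n :=
  \sum_(i < n) \sum_(j < n) (x i 0 * y j 0) *: mu i j.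

Definition Lmx (R : realType) (n : nat) (mu : bilin R n) (x : 'cV[R[i]]_n)
  : 'M[R[i]]_n := \matrix_(k, j) (bapp mu x (evec j)) k 0.
Definition Rmx (R : realType) (n : nat) (mu : bilin R n) (x : 'cV[R[i]]_n)
  : 'M[R[i]]_n := \matrix_(k, j) (bapp mu (evec j) x) k 0.

Definition adjmx (R : realType) (n : nat) (A : 'M[R[i]]_n) : 'M[R[i]]_n :=
  map_mx (fun z => z^*) A^T.

Definition Mmu (R : realType) (n : nat) (mu : bilin R n) : 'M[R[i]]_n :=
  (\sum_(i < n) Lmx mu (evec i) *m adjmx (Lmx mu (evec i))) *+ 2
  - (\sum_(i < n) adjmx (Lmx mu (evec i)) *m Lmx mu (evec i)) *+ 2
  - (\sum_(i < n) adjmx (Rmx mu (evec i)) *m Rmx mu (evec i)) *+ 2.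

Definition is_derivation (R : realType) (n : nat) (mu : bilin R n)
  (D : 'M[R[i]]_n) : Prop :=
  forall x y : 'cV[R[i]]_n,
    D *m bapp mu x y = bapp mu (D *m x) y + bapp mu x (D *m y).

(* mu <> 0, i.e. [mu] is a point of P V_n *)
Definition bilin_nonzero (R : realType) (n : nat) (mu : bilin R n) : Prop :=
  exists i j, mu i j != 0.

From mathcomp Require Import all_boot all_order all_algebra.
From mathcomp Require Import reals.
From mathcomp.real_closed Require Import complex.
From mathcomp Require Import spectral sesquilinear.
From mathcomp Require Import ring.
Set Implicit Arguments. Unset Strict Implicit. Unset Printing Implicit Defensive.
Import Order.TTheory GRing.Theory Num.Theory.
Local Open Scope ring_scope.

(* Since c_mu is real and M_mu is Hermitian, D is Hermitian, so
   D = P^* diag(d) P with P unitary.  Let nu a b e be the structure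
   constants of mu in the orthonormal eigenbasis (q_a).  Then
   (1) nu a b e (d_e - d_a - d_b) = 0, since D is a derivation;
   (2) c_mu + d_l = 2 sum |nu a b l|^2 - 2 sum |nu a l e|^2
                    - 2 sum |nu l a e|^2, the l-th diagonal entry of
       P M_mu P^* = c_mu + diag(d), computed via Frobenius norms.
   With the integer vectors eps_e - eps_a - eps_b for the triples where
   nu a b e != 0, (1) says that d is orthogonal to them and (2) that
   c_mu + d lies in their span; a linear-algebra argument over Q then shows
   that d is a rational multiple of c_mu.  Clearing denominators and dividing
   by the gcd gives the scaling factor. *)

Section RealFieldOrthogonality.
Variable F : realFieldType.

(* Over a real field, a vector of the row space of A that is orthogonal to
   every row of A has zero squared norm, hence vanishes. *)
Lemma row_space_orth_eq0 m n (A : 'M[F]_(m, n)) (x : 'rV[F]_n) :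
  (x <= A)%MS -> x *m A^T = 0 -> x = 0.
Proof.
move=> /submxP [y ->] xAT0.
have norm0 : \sum_l ((y *m A) 0 l) ^+ 2 = 0.
  have /matrixP /(_ 0 0) : (y *m A) *m (y *m A)^T = 0.
    by rewrite trmx_mul mulmxA xAT0 mul0mx.
  rewrite !mxE => E; rewrite -[RHS]E; apply: eq_bigr => l _; by rewrite !mxE expr2.
apply/rowP => l; rewrite [RHS]mxE; apply/eqP; rewrite -sqrf_eq0; apply/eqP.
exact: (psumr_eq0P (P := predT) (fun i _ => sqr_ge0 _) norm0).
Qed.

(* Every row vector splits as an element of the row space of A plus a vector
   orthogonal to all the rows of A (the kernel of A^T is a complement). *)
Lemma orth_decomp m n (A : 'M[F]_(m, n)) (v : 'rV[F]_n) :
  exists (y : 'rV[F]_m) (u : 'rV[F]_n), u *m A^T = 0 /\ v = y *m A + u.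
Proof.
set K := kermx A^T.
have AK0 : (A :&: K)%MS = 0.
  apply/row_matrixP => i; rewrite row0; apply: (@row_space_orth_eq0 m n A).
    exact: submx_trans (row_sub i _) (capmxSl _ _).
  by apply/sub_kermxP; exact: submx_trans (row_sub i _) (capmxSr _ _).
have AKfull : row_full (A + K)%MS.
  rewrite /row_full mxrank_disjoint_sum // mxrank_ker mxrank_tr.
  by rewrite subnKC // rank_leq_col.
have /sub_addsmxP [[y w] /= ->] : (v <= A + K)%MS.
  by apply: submx_trans (submx1 _) _; rewrite sub1mx.
by exists y, (w *m K); rewrite -mulmxA mulmx_ker mulmx0.
Qed.

Lemma int_family_decomp (S : finType) n (al : S -> 'I_n -> int) :
  exists (u : 'I_n -> F) (y : S -> F),
    (forall s, \sum_l (al s l)%:~R * u l = 0) /\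
    (forall l, 1 = \sum_s y s * (al s l)%:~R + u l).
Proof.
pose A : 'M[F]_(#|{: S}|, n) := \matrix_(i, l) (al (enum_val i) l)%:~R.
have [y [u [uA1 decomp]]] := orth_decomp A (const_mx 1).
have sum_enum (G : 'I_#|{: S}| -> F) : \sum_i G i = \sum_s G (enum_rank s).
  by rewrite (reindex enum_rank) //; exists enum_val => x _;
    [rewrite enum_rankK | rewrite enum_valK].
exists (fun l => u 0 l), (fun s => y 0 (enum_rank s)); split.
- move=> s; move/matrixP: uA1 => /(_ 0 (enum_rank s)); rewrite !mxE => E.
  by rewrite -[RHS]E; apply: eq_bigr => l _; rewrite !mxE enum_rankK mulrC.
- move=> l; have /matrixP /(_ 0 l) := decomp; rewrite !mxE => E.
  rewrite {1}E; congr (_ + _); rewrite sum_enum; apply: eq_bigr => s _.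
  by rewrite !mxE enum_rankK.
Qed.
End RealFieldOrthogonality.

Section RationalDirection.
Variables (C : numClosedFieldType) (S : finType) (n : nat).

(* A complex vector orthogonal to the integer vectors al s and lying in
   their span vanishes: its squared norm is a combination of the
   (conjugated) orthogonality relations. *)
Lemma orth_span_eq0 (al : S -> 'I_n -> int) (x : 'I_n -> C) (w : S -> C) :
  (forall s, \sum_l (al s l)%:~R * x l = 0) ->
  (forall l, x l = \sum_s w s * (al s l)%:~R) -> forall l, x l = 0.
Proof.
move=> orth span l.
have norm0 : \sum_l `|x l| ^+ 2 = 0.
  under eq_bigr => j _ do rewrite normCK {1}span mulr_suml.
  rewrite exchange_big big1 //= => s _.
  under eq_bigr => j _ do rewrite -mulrA.
  rewrite -mulr_sumr -[X in _ * X]conjCK rmorph_sum /=.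
  under eq_bigr => j _ do rewrite rmorphM /= conjCK rmorph_int.
  by rewrite orth conjC0 mulr0.
have /eqP := psumr_eq0P (P := predT) (fun i _ => exprn_ge0 2 (normr_ge0 (x i)))
  norm0 (i := l) isT.
by rewrite sqrf_eq0 normr_eq0 => /eqP.
Qed.

(* Indeed, writing 1 = sum y s al s + u over Q
   with u orthogonal to the relevant al s, the vector dv + c u is orthogonal
   to them and lies in their span, hence vanishes. *)
Lemma rational_direction (al : S -> 'I_n -> int) (dv : 'I_n -> C) (c : C)
    (w : S -> C) :
  (forall s, w s != 0 -> \sum_l (al s l)%:~R * dv l = 0) ->
  (forall l, c + dv l = \sum_s w s * (al s l)%:~R) ->
  exists u : 'I_n -> rat, forall l, dv l = c * ratr (u l).
Proof.
move=> orth span.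
pose al' s l : int := if w s != 0 then al s l else 0.
have [u [y [uorth one_decomp]]] := int_family_decomp rat al'.
exists (fun l => - u l) => l; apply/eqP.
rewrite rmorphN mulrN -subr_eq0 opprK; apply/eqP; move: l.
apply: (orth_span_eq0 (al := al') (w := fun s => w s - c * ratr (y s))).
- move=> s; rewrite /al'; have [ws0|ws0] := eqVneq (w s) 0.
    by rewrite big1 // => l _; rewrite mulr0z mul0r.
  have urel : \sum_l (al s l)%:~R * ratr (u l) = 0 :> C.
    have /(congr1 (@ratr C)) := uorth s; rewrite /al' ws0 rmorph0 rmorph_sum.
    by move=> E; rewrite -[RHS]E; apply: eq_bigr => l _;
      rewrite rmorphM /= rmorph_int.
  under eq_bigr => l _ do rewrite mulrDr mulrCA.
  by rewrite big_split /= orth // -mulr_sumr urel mulr0 addr0.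
- move=> l.
  have span' : c + dv l = \sum_s w s * (al' s l)%:~R.
    rewrite span; apply: eq_bigr => s _; rewrite /al'.
    by have [->|] := eqVneq (w s) 0; rewrite ?mul0r ?mulr0.
  have /(congr1 (@ratr C)) := one_decomp l.
  rewrite rmorph1 rmorphD rmorph_sum /=.
  under eq_bigr => s _ do rewrite rmorphM /= rmorph_int.
  move=> ul.
  have {}ul : ratr (u l) = 1 - \sum_s ratr (y s) * (al' s l)%:~R :> C.
    by rewrite {1}ul addrAC subrr add0r.
  rewrite ul mulrBr mulr1 mulr_sumr.
  under [RHS]eq_bigr => s _ do rewrite mulrBl -mulrA.
  by rewrite sumrB -span' addrA (addrC (dv l)).
Qed.
End RationalDirection.

(* The integers k l are coprime as a family: their only common divisor in N
   is 1 (in particular they do not all vanish). *)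
Definition coprime_family n (k : 'I_n -> int) : Prop :=
  forall g : nat, (forall l, (g%:Z %| k l)%Z) -> g = 1%N.

Lemma common_denominator n (u : 'I_n -> rat) :
  exists (N : int) (k : 'I_n -> int), 0 < N /\ forall l, u l * N%:~R = (k l)%:~R.
Proof.
exists (\prod_j denq (u j)), (fun l => numq (u l) * \prod_(j | j != l) denq (u j)).
split; first by apply: prodr_gt0 => j _; exact: denq_gt0.
by move=> l; rewrite (bigD1 l) //= !intrM mulrA -numqE.
Qed.

Lemma divide_by_content n (k : 'I_n -> int) (l0 : 'I_n) : k l0 != 0 ->
  exists (g : nat) (k' : 'I_n -> int),
    [/\ (0 < g)%N, forall l, k l = k' l * g%:Z & coprime_family k'].
Proof.
move=> kl0; pose g := \big[gcdn/0]_l `|k l|%N.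
have g_dvd l : (g %| `|k l|)%N by apply: (biggcdn_inf l).
have g_gt0 : (0 < g)%N.
  by rewrite lt0n; apply: contra kl0 => /eqP g0; move: (g_dvd l0);
    rewrite g0 dvd0n absz_eq0.
have kE l : (k l %/ g%:Z)%Z * g%:Z = k l by rewrite divzK // dvdzE.
exists g, (fun l => (k l %/ g%:Z)%Z); split=> [//|l|d dk]; first by rewrite kE.
have dg_dvd : (d * g %| g)%N.
  apply/dvdn_biggcdP => l _; rewrite -[X in (_ %| X)%N]/(`|k l|%N) -kE abszM.
  exact: dvdn_mul (dk l) (dvdnn g).
case: d dg_dvd {dk} => [|[//|d]]; first by rewrite mul0n dvd0n gtn_eqF.
move/(dvdn_leq g_gt0); rewrite -[X in (_ <= X)%N]mul1n leq_pmul2r //.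
Qed.

Lemma primitive_multiple n (u : 'I_n -> rat) (l0 : 'I_n) : u l0 != 0 ->
  exists (m : rat) (k : 'I_n -> int),
    [/\ 0 < m, forall l, m * u l = (k l)%:~R & coprime_family k].
Proof.
move=> ul0; have [N [k [N_gt0 uNk]]] := common_denominator u.
have kl0 : k l0 != 0.
  by rewrite -(intr_eq0 rat) -uNk mulf_neq0 // intr_eq0 gt_eqF.
have [g [k' [g_gt0 kk' k'_prim]]] := divide_by_content kl0.
exists (N%:~R / g%:R), k'; split => // [|l].
  by rewrite divr_gt0 ?ltr0z // ltr0n.
by rewrite mulrAC (mulrC N%:~R) uNk kk' intrM mulfK // pnatr_eq0 -lt0n.
Qed.

Definition primitive_integral_scaling (F : fieldType) n (s : F) (D : 'M[F]_n)
  : Prop :=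
  (forall lam : F, eigenvalue (s *: D) lam -> exists k : int, lam = k%:~R) /\
  (D != 0 -> forall d : nat,
     (forall lam : F, eigenvalue (s *: D) lam ->
        exists k : int, lam = (d%:R * k%:~R)) ->
     d = 1%N).

Lemma primitive_integral_scaling0 (F : fieldType) n (s : F) :
  primitive_integral_scaling s (0 : 'M_n).
Proof.
split=> [lam|]; last by rewrite eqxx.
rewrite scaler0 => /eigenvalueP [v]; rewrite mulmx0 => /esym/eqP.
by rewrite scaler_eq0 => /orP [/eqP ->|->]; [exists 0|].
Qed.

Lemma eigenvalue_conj_diag (F : fieldType) n (P Q : 'M[F]_n) (d : 'rV_n) lam :
  P *m Q = 1%:M -> eigenvalue (Q *m diag_mx d *m P) lam <-> exists l, lam = d 0 l.
Proof.
move=> PQ; have QP := mulmx1C PQ; split.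
- move=> /eigenvalueP [v Hv v0]; set w := v *m Q.
  have Hw : w *m diag_mx d = lam *: w.
    have := congr1 (mulmx^~ Q) Hv.
    by rewrite -!mulmxA PQ mulmx1 -scalemxAl !mulmxA.
  have w0 : w != 0.
    apply: contra v0 => /eqP w0; apply/eqP.
    by rewrite -[v]mulmx1 -QP mulmxA -/w w0 mul0mx.
  case: (pickP (fun l => w 0 l != 0)) => [l wl0 | w_eq0]; last first.
    by case/eqP: w0; apply/rowP => l; move/negbFE: (w_eq0 l) => /eqP ->;
      rewrite mxE.
  exists l; move/matrixP: Hw => /(_ 0 l); rewrite mul_mx_diag mxE [in RHS]mxE.
  by move=> E; apply: (mulIf wl0); rewrite -E mulrC.
- move=> [l ->]; apply/eigenvalueP; exists (delta_mx 0 l *m P).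
    rewrite !mulmxA -(mulmxA _ P Q) PQ mulmx1 scalemxAl; congr (_ *m _).
    apply/rowP => j; rewrite mul_mx_diag !mxE eqxx /=.
    by case: eqP => [->|_]; rewrite ?mul1r ?mulr1 ?mul0r ?mulr0.
  apply: contraTneq isT => /(congr1 (mulmx^~ Q)).
  rewrite -mulmxA PQ mulmx1 mul0mx => /matrixP /(_ 0 l).
  by rewrite !mxE !eqxx /= => /eqP; rewrite oner_eq0.
Qed.

Lemma primitive_scaling_conj_diag (F : numFieldType) n (P Q : 'M[F]_n)
    (d : 'rV_n) (s : F) (k : 'I_n -> int) :
  P *m Q = 1%:M -> (forall l, s * d 0 l = (k l)%:~R) -> coprime_family k ->
  primitive_integral_scaling s (Q *m diag_mx d *m P).
Proof.
move=> PQ sdk k_prim.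
have spec lam : eigenvalue (s *: (Q *m diag_mx d *m P)) lam <->
    exists l, lam = (k l)%:~R.
  have -> : s *: (Q *m diag_mx d *m P) = Q *m diag_mx (s *: d) *m P.
    by rewrite [diag_mx (s *: d)]linearZ /= -scalemxAr -scalemxAl.
  rewrite eigenvalue_conj_diag //.
  by split=> -[l ->]; exists l; rewrite mxE sdk.
split=> [lam /spec [l ->]|_ g g_dvd]; first by exists (k l).
apply: k_prim => l; have [t kt] := g_dvd _ (proj2 (spec _) (ex_intro _ l erefl)).
have -> : k l = g%:Z * t by apply: (@intr_inj F); rewrite kt intrM.
exact/dvdz_mulr/dvdzz.
Qed.

(* If the diagonal is a real multiple c u of a rational vector u, the
   rescaling by m / |c| (m from primitive_multiple) makes it a coprime integer
   vector, up to the sign of c. *)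
Lemma rational_spectrum_scaling (R : realType) n (P Q : 'M[R[i]]_n)
    (d : 'rV[R[i]]_n) (c : R) (u : 'I_n -> rat) :
  P *m Q = 1%:M -> (forall l, d 0 l = (c%:C)%C * ratr (u l)) ->
  exists s : R, 0 < s /\ primitive_integral_scaling (s%:C)%C (Q *m diag_mx d *m P).
Proof.
move=> PQ du; case: (pickP (fun l => d 0 l != 0)) => [l0 dl0 | d_eq0]; last first.
  have -> : d = 0.
    by apply/rowP => l; move/negbFE: (d_eq0 l) => /eqP ->; rewrite mxE.
  exists 1; rewrite linear0 mulmx0 mul0mx; split=> //.
  exact: primitive_integral_scaling0.
have [c0 ul0] : c != 0 /\ u l0 != 0.
  move: dl0; rewrite du mulf_eq0 negb_or [ratr _ == 0]fmorph_eq0 => /andP [cC0 ->].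
  by split=> //; apply: contra cC0 => /eqP ->.
have [m [k [m_gt0 muk k_prim]]] := primitive_multiple ul0.
pose sg : int := if 0 < c then 1 else -1.
exists (ratr m / `|c|); split; first by rewrite divr_gt0 ?ltr0q ?normr_gt0.
apply: (primitive_scaling_conj_diag (k := fun l => sg * k l) PQ) => [l|g gk].
  have ratrC q : ratr q = ((ratr q : R)%:C)%C :> R[i].
    by rewrite (fmorph_rat (real_complex R)).
  rewrite du ratrC -(rmorph_int (real_complex R)) -!rmorphM; congr (_%:C)%C.
  rewrite intrM.
  have -> : (k l)%:~R = ratr m * ratr (u l) :> R.
    by rewrite -ratr_int -muk rmorphM.
  rewrite /sg; case: (ltrgtP 0 c) => hc.
  - by rewrite gtr0_norm //; field; rewrite gt_eqF.
  - by rewrite ltr0_norm //; field; rewrite lt_eqF.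
  - by move: c0; rewrite -hc eqxx.
apply: k_prim => l; have := gk l; rewrite /sg.
by case: ifP => _; rewrite ?mul1r // mulN1r dvdzE abszN.
Qed.

Local Open Scope sesquilinear_scope.

Section Frobenius.
Variable C : numClosedFieldType.

Lemma adjmxM m n p (A : 'M[C]_(m, n)) (B : 'M[C]_(n, p)) :
  (A *m B)^t* = B^t* *m A^t*.
Proof. by rewrite trmx_mul map_mxM. Qed.

Lemma adjmxB m n (A B : 'M[C]_(m, n)) : (A - B)^t* = A^t* - B^t*.
Proof. by rewrite !raddfB. Qed.

Definition frob m n (X : 'M[C]_(m, n)) := \sum_i \sum_j `|X i j| ^+ 2.

Lemma frobE m n (X : 'M[C]_(m, n)) : frob X = \tr (X *m X^t*).
Proof.
apply: eq_bigr => i _; rewrite mxE; apply: eq_bigr => j _.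
by rewrite normCK !mxE.
Qed.

Lemma frob_tr m n (X : 'M[C]_(m, n)) : frob X^T = frob X.
Proof.
by rewrite /frob exchange_big; apply: eq_bigr => i _; apply: eq_bigr => j _;
  rewrite mxE.
Qed.

Lemma frob_unitary m n (U : 'M[C]_m) (X : 'M[C]_(m, n)) (V : 'M[C]_n) :
  U^t* *m U = 1%:M -> V *m V^t* = 1%:M -> frob (U *m X *m V) = frob X.
Proof.
move=> UU VV; rewrite !frobE !adjmxM !mulmxA -(mulmxA _ V) VV mulmx1.
by rewrite mxtrace_mulC !mulmxA UU mul1mx.
Qed.
End Frobenius.

Lemma sum_delta_scale (K : pzRingType) (V : lmodType K) n (f : 'I_n -> V) i :
  \sum_a ((a == i)%:R : K) *: f a = f i.
Proof.
rewrite (bigD1 i) //= eqxx scale1r big1 ?addr0 // => a /negPf ->.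
by rewrite scale0r.
Qed.

Lemma sum_delta_mul (K : pzRingType) n (F : 'I_n -> K) i :
  \sum_a F a * (a == i)%:R = F i.
Proof.
rewrite (bigD1 i) //= eqxx mulr1 big1 ?addr0 // => a /negPf ->.
by rewrite mulr0.
Qed.

Section BilinearMaps.
Variables (R : realType) (n : nat) (mu : bilin R n).
Local Notation C := R[i].

Lemma bapp_evec i j : bapp mu (evec i) (evec j) = mu i j.
Proof.
have evecE (k a : 'I_n) : (evec k : 'cV[C]_n) a 0 = (a == k)%:R.
  by rewrite /evec mxE andbT.
rewrite /bapp -[RHS](sum_delta_scale (fun a => mu a j) i).
apply: eq_bigr => a _; rewrite -(sum_delta_scale (mu a) j) scaler_sumr.
by apply: eq_bigr => b _; rewrite !evecE scalerA.
Qed.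

Lemma bappE x y k :
  bapp mu x y k 0 = \sum_i \sum_j x i 0 * y j 0 * mu i j k 0.
Proof.
rewrite /bapp summxE; apply: eq_bigr => i _; rewrite summxE.
by apply: eq_bigr => j _; rewrite mxE.
Qed.

Lemma mulmx_bapp (A : 'M[C]_n) x y :
  A *m bapp mu x y = bapp (fun i j => A *m mu i j) x y.
Proof.
rewrite /bapp mulmx_sumr; apply: eq_bigr => i _; rewrite mulmx_sumr.
by apply: eq_bigr => j _; rewrite scalemxAr.
Qed.

Lemma bappZl (a : C) x y : bapp mu (a *: x) y = a *: bapp mu x y.
Proof.
rewrite /bapp scaler_sumr; apply: eq_bigr => i _; rewrite scaler_sumr.
by apply: eq_bigr => j _; rewrite scalerA mxE mulrA.
Qed.

Lemma bappZr (a : C) x y : bapp mu x (a *: y) = a *: bapp mu x y.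
Proof.
rewrite /bapp scaler_sumr; apply: eq_bigr => i _; rewrite scaler_sumr.
by apply: eq_bigr => j _; rewrite scalerA mxE mulrCA mulrA.
Qed.

Lemma LmxE i k j : Lmx mu (evec i) k j = mu i j k 0.
Proof. by rewrite /Lmx mxE bapp_evec. Qed.

Lemma Mmu_hermitian : (Mmu mu)^t* = Mmu mu.
Proof.
rewrite /Mmu (_ : @adjmx R n = fun A => A^t*) //= !raddfB /= !raddfMn /=.
rewrite !raddf_sum /=; congr (_ + _ + _); congr (_ *+ 2).
all: by apply: eq_bigr => i _; rewrite ?raddfN /= adjmxM trmxCK.
Qed.
End BilinearMaps.

(* If M_mu = c I + D with c real, then D is Hermitian, hence unitarily
   diagonalisable: D = P^* diag(d) P with P unitary. *)
Lemma critical_spectral (R : realType) n (mu : bilin R n) (cmu : R)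
    (D : 'M[R[i]]_n) :
  Mmu mu = (cmu%:C)%C%:M + D ->
  exists (P : 'M[R[i]]_n) (d : 'rV[R[i]]_n),
    P *m P^t* = 1%:M /\ D = P^t* *m diag_mx d *m P.
Proof.
move=> hM; have D_herm : D^t* = D.
  have -> : D = Mmu mu - (cmu%:C)%C%:M by rewrite hM addrC addKr.
  rewrite adjmxB Mmu_hermitian; congr (_ - _).
  apply/matrixP => i j; rewrite !mxE eq_sym.
  by case: eqP => _; rewrite ?mulr1n ?mulr0n ?conjC0 //; apply/eqP;
    rewrite eq_complex /= oppr0 !eqxx.
exists (spectralmx D), (spectral_diag D); split.
  exact/unitarymxP/spectral_unitarymx.
have /orthomx_spectralP : D \is normalmx by apply/normalmxP; rewrite D_herm.
by rewrite invmx_unitary ?spectral_unitarymx.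
Qed.

Section Eigenbasis.
Variables (R : realType) (n : nat) (mu : bilin R n) (cmu : R).
Variables (D P : 'M[R[i]]_n) (d : 'rV[R[i]]_n).
Local Notation C := R[i].
Local Notation Q := (P^t*).
Hypothesis hder : is_derivation mu D.
Hypothesis hM : Mmu mu = (cmu%:C)%C%:M + D.
Hypothesis PQ : P *m Q = 1%:M.
Hypothesis HD : D = Q *m diag_mx d *m P.

Let QP : Q *m P = 1%:M := mulmx1C PQ.
Let QadjP : Q^t* = P := trmxCK P.

(* Structure constants of mu in the orthonormal eigenbasis q_a = col a Q of
   D: nu a b e is the e-th coordinate of mu(q_a, q_b). *)
Definition nu a b e := (P *m bapp mu (col a Q) (col b Q)) e 0.

Lemma eigenvector a : D *m col a Q = d 0 a *: col a Q.
Proof.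
have DQ : D *m Q = Q *m diag_mx d by rewrite HD -!mulmxA PQ mulmx1.
apply/colP => k; have /matrixP /(_ k a) := DQ; rewrite mul_mx_diag !mxE => E.
by rewrite mulrC -E; apply: eq_bigr => j _; rewrite !mxE.
Qed.

Lemma nu_derivation a b e : nu a b e * (d 0 e - d 0 a - d 0 b) = 0.
Proof.
have := hder (col a Q) (col b Q).
rewrite !eigenvector bappZl bappZr -scalerDl => /(congr1 (mulmx P)).
have PD : P *m D = diag_mx d *m P by rewrite HD !mulmxA PQ mul1mx.
rewrite mulmxA PD -mulmxA -scalemxAr => /matrixP /(_ e 0).
rewrite mul_diag_mx !mxE; set S := \sum_j _ => E; rewrite /nu mxE -/S.
have -> : S * (d 0 e - d 0 a - d 0 b) = d 0 e * S - (d 0 a + d 0 b) * S by ring.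
by rewrite E subrr.
Qed.

Lemma diag_Mmu l : (P *m Mmu mu *m Q) l l = (cmu%:C)%C + d 0 l.
Proof.
rewrite hM mulmxDr mulmxDl mul_mx_scalar -scalemxAl PQ {1}HD.
by rewrite !mulmxA PQ mul1mx -mulmxA PQ mulmx1 !mxE eqxx mulr1n mulr1.
Qed.

Lemma diag_sum (X : 'I_n -> 'M[C]_n) l :
  (P *m (\sum_i X i) *m Q) l l = \sum_i (P *m X i *m Q) l l.
Proof. by rewrite mulmx_sumr mulmx_suml summxE. Qed.

Lemma frob_eigenbasis (N : 'M[C]_n) (v : 'I_n -> 'cV[C]_n) :
  (forall a, v a = N *m col a Q) ->
  \sum_a \sum_e `|(P *m v a) e 0| ^+ 2 = frob N.
Proof.
move=> vE; rewrite -(frob_unitary N (U := P) (V := Q)) ?QadjP ?QP //.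
rewrite -frob_tr; apply: eq_bigr => a _; apply: eq_bigr => e _.
by rewrite vE mulmxA !mxE; congr (`|_| ^+ 2); apply: eq_bigr => j _; rewrite !mxE.
Qed.

Lemma diag_AAt (A : 'M[C]_n) l :
  (P *m (A *m A^t*) *m Q) l l = \sum_j `|(P *m A) l j| ^+ 2.
Proof.
rewrite !mulmxA -(mulmxA (P *m A)) -adjmxM mxE; apply: eq_bigr => j _.
by rewrite normCK !mxE.
Qed.

Lemma diag_AtA (A : 'M[C]_n) l :
  (P *m (A^t* *m A) *m Q) l l = \sum_k `|(A *m Q) k l| ^+ 2.
Proof.
rewrite -{1}QadjP mulmxA -adjmxM -mulmxA mxE; apply: eq_bigr => k _.
by rewrite normCK !mxE mulrC.
Qed.

(* The first is
   the Frobenius norm of (i, j) |-> <q_l, mu(e_i, e_j)>, the other two those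
   of i |-> mu(e_i, q_l) and i |-> mu(q_l, e_i); changing to the orthonormal
   basis (q_a) does not affect these norms. *)
Lemma diag_LLt l :
  (P *m (\sum_i Lmx mu (evec i) *m adjmx (Lmx mu (evec i))) *m Q) l l =
  \sum_a \sum_b `|nu a b l| ^+ 2.
Proof.
pose B := \matrix_(i, j) (P *m mu i j) l 0.
have nuE a b : nu a b l = (Q^T *m B *m Q) a b.
  rewrite /nu mulmx_bapp bappE mxE exchange_big /=; apply: eq_bigr => j _.
  rewrite [(Q^T *m B) a j]mxE mulr_suml; apply: eq_bigr => i _.
  by rewrite !mxE; ring.
have QTunitary : (Q^T)^t* *m Q^T = 1%:M.
  have -> : (Q^T)^t* = P^T by apply/matrixP => i j; rewrite !mxE conjCK.
  by rewrite -trmx_mul QP trmx1.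
have -> : \sum_a \sum_b `|nu a b l| ^+ 2 = frob (Q^T *m B *m Q).
  by apply: eq_bigr => a _; apply: eq_bigr => b _; rewrite nuE.
rewrite frob_unitary ?QadjP ?QP // diag_sum.
apply: eq_bigr => i _; rewrite diag_AAt; apply: eq_bigr => j _.
rewrite !mxE; congr (`|_| ^+ 2); apply: eq_bigr => k _.
by rewrite (LmxE mu).
Qed.

Lemma diag_LtL l :
  (P *m (\sum_i adjmx (Lmx mu (evec i)) *m Lmx mu (evec i)) *m Q) l l =
  \sum_a \sum_e `|nu a l e| ^+ 2.
Proof.
pose N := \matrix_(k, i) (Lmx mu (evec i) *m Q) k l.
rewrite (frob_eigenbasis (N := N)) => [|a]; last first.
  apply/colP => k; rewrite bappE !mxE; apply: eq_bigr => i _.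
  rewrite !mxE mulr_suml; apply: eq_bigr => j _.
  by rewrite !mxE (bapp_evec mu); ring.
rewrite diag_sum -frob_tr; apply: eq_bigr => i _; rewrite diag_AtA.
by apply: eq_bigr => k _; rewrite !mxE.
Qed.

Lemma diag_RtR l :
  (P *m (\sum_i adjmx (Rmx mu (evec i)) *m Rmx mu (evec i)) *m Q) l l =
  \sum_a \sum_e `|nu l a e| ^+ 2.
Proof.
pose N := \matrix_(k, i) (Rmx mu (evec i) *m Q) k l.
rewrite (frob_eigenbasis (N := N)) => [|a]; last first.
  apply/colP => k; rewrite bappE exchange_big !mxE; apply: eq_bigr => j _.
  rewrite !mxE mulr_suml; apply: eq_bigr => i _.
  by rewrite !mxE (bapp_evec mu); ring.
rewrite diag_sum -frob_tr; apply: eq_bigr => i _; rewrite diag_AtA.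
by apply: eq_bigr => k _; rewrite !mxE.
Qed.

Lemma critical_diag l : (cmu%:C)%C + d 0 l =
  2 * (\sum_a \sum_b `|nu a b l| ^+ 2)
  - 2 * (\sum_a \sum_e `|nu a l e| ^+ 2)
  - 2 * (\sum_a \sum_e `|nu l a e| ^+ 2).
Proof.
have phiD X Y :
    (P *m (X + Y) *m Q) l l = (P *m X *m Q) l l + (P *m Y *m Q) l l.
  by rewrite mulmxDr mulmxDl mxE.
have phiN X : (P *m (- X) *m Q) l l = - (P *m X *m Q) l l.
  by rewrite mulmxN mulNmx mxE.
have phi2 X : (P *m (X *+ 2) *m Q) l l = 2 * (P *m X *m Q) l l.
  by rewrite mulr2n phiD -mulr2n mulr_natl.
by rewrite -diag_Mmu /Mmu phiD phiN phiD phiN !phi2 diag_LLt diag_LtL diag_RtR.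
Qed.
End Eigenbasis.

Definition triple_weight n (s : 'I_n * 'I_n * 'I_n) (l : 'I_n) : int :=
  (s.2 == l)%:R - (s.1.1 == l)%:R - (s.1.2 == l)%:R.

Lemma triple_weight_pairing (K : comPzRingType) n (s : 'I_n * 'I_n * 'I_n)
    (x : 'I_n -> K) :
  \sum_l (triple_weight s l)%:~R * x l = x s.2 - x s.1.1 - x s.1.2.
Proof.
under eq_bigr => l _ do rewrite mulrC !intrB !rmorph_nat !mulrBr ![(_ == l)]eq_sym.
by rewrite !sumrB !sum_delta_mul.
Qed.

Lemma sum_triple_weight (K : pzRingType) n (F : 'I_n -> 'I_n -> 'I_n -> K) l :
  \sum_(s : 'I_n * 'I_n * 'I_n) F s.1.1 s.1.2 s.2 * (triple_weight s l)%:~R =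
  \sum_a \sum_b F a b l - \sum_a \sum_e F a l e - \sum_a \sum_e F l a e.
Proof.
rewrite [RHS]addrAC.
have triple_sum (G : 'I_n -> 'I_n -> 'I_n -> K) :
    \sum_(s : 'I_n * 'I_n * 'I_n) G s.1.1 s.1.2 s.2 =
    \sum_a \sum_b \sum_e G a b e.
  rewrite -(pair_big xpredT xpredT (fun ab e => G ab.1 ab.2 e)) /=.
  by rewrite -(pair_big xpredT xpredT (fun a b => \sum_e G a b e)).
under eq_bigr => s _ do rewrite !intrB !rmorph_nat !mulrBr.
rewrite !sumrB (triple_sum (fun a b e => F a b e * (e == l)%:R))
  (triple_sum (fun a b e => F a b e * (a == l)%:R))
  (triple_sum (fun a b e => F a b e * (b == l)%:R)); congr (_ - _ - _).
- by apply: eq_bigr => a _; apply: eq_bigr => b _; rewrite sum_delta_mul.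
- rewrite -[RHS](sum_delta_mul (fun a => \sum_b \sum_e F a b e)).
  by apply: eq_bigr => a _; rewrite mulr_suml; apply: eq_bigr => b _;
    rewrite mulr_suml.
- apply: eq_bigr => a _.
  rewrite -[RHS](sum_delta_mul (fun b => \sum_e F a b e)).
  by apply: eq_bigr => b _; rewrite mulr_suml.
Qed.

(* The
   triples (a, b, e) with nu a b e != 0 give integer relations orthogonal
   to d (derivation property), and with weights 2 |nu a b e|^2 they span
   c_mu + d (diagonal identity). *)
Lemma critical_spectrum_rational (R : realType) n (mu : bilin R n) (cmu : R)
    (D P : 'M[R[i]]_n) (d : 'rV[R[i]]_n) :
  is_derivation mu D -> Mmu mu = (cmu%:C)%C%:M + D ->
  P *m P^t* = 1%:M -> D = P^t* *m diag_mx d *m P ->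
  exists u : 'I_n -> rat, forall l, d 0 l = (cmu%:C)%C * ratr (u l).
Proof.
move=> hder hM PQ HD.
pose w (s : 'I_n * 'I_n * 'I_n) := 2 * `|nu mu P s.1.1 s.1.2 s.2| ^+ 2.
apply: (rational_direction (al := @triple_weight n) (w := w)
  (dv := fun l => d 0 l)).
- move=> [[a b] e]; rewrite /w /= mulf_eq0 pnatr_eq0 expf_eq0 normr_eq0 /= => nu0.
  rewrite triple_weight_pairing /=.
  have /eqP := nu_derivation hder PQ HD a b e.
  by rewrite mulf_eq0 (negPf nu0) => /eqP.
- move=> l; rewrite (critical_diag hM PQ HD).
  rewrite (sum_triple_weight (fun a b e => 2 * `|nu mu P a b e| ^+ 2)).
  by congr (_ - _ - _); rewrite mulr_sumr; apply: eq_bigr => a _; rewrite mulr_sumr.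
Qed.

Close Scope sesquilinear_scope.

Theorem theorem4p2 (R : realType) (n : nat) (mu : bilin R n)
  (cmu : R) (D : 'M[R[i]]_n) :
  bilin_nonzero mu ->
  is_derivation mu D ->
  Mmu mu = (cmu%:C)%C%:M + D ->
  exists c : R, 0 < c /\
    (forall lam : R[i], eigenvalue ((c%:C)%C *: D) lam ->
       exists k : int, lam = k%:~R) /\
    (D != 0 ->
       forall d : nat,
         (forall lam : R[i], eigenvalue ((c%:C)%C *: D) lam ->
            exists k : int, lam = (d%:R * k%:~R)) ->
         d = 1%N).
Proof.
move=> _ hder hM.
have [P [d [PQ HD]]] := critical_spectral hM.
have [u du] := critical_spectrum_rational hder hM PQ HD.
by rewrite HD; exact: rational_spectrum_scaling PQ du.
Qed.
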